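(* QEPmin is in the hard case if and only if $g_0\perp\mathcal U$ and $\|(H-\lambda_{\min}(H)I)^{\dagger}g_0\|_2\le\gamma$, where $\lambda_{\min}(H)$ is the smallest eigenvalue of $H$ and $\mathcal U$ is the eigenspace of $H$ associated with $\lambda_{\min}(H)$.
   Context: Let $A\in\mathbb{R}^{n\times n}$ be symmetric, $C\in\mathbb{R}^{n\times m}$ ($m<n$) full column rank, $b\in\mathbb{R}^m$, $n_0=C(C^{\top}C)^{-1}b$ with $\|n_0\|<1$, $\gamma=\sqrt{1-\|n_0\|^2}$, $P=I-C(C^{\top}C)^{-1}C^{\top}$ (orthogonal projector onto $\mathcal N(C^{\top})$), $b_0=PAn_0$, assumed nonzero. Let $S_1\in\mathbb{R}^{n\times(n-m)}$ have orthonormal columns spanning $\mathcal N(C^{\top})$, $H=S_1^{\top}AS_1$, $g_0=S_1^{\top}b_0$. $X^\dagger$ is the Moore–Penrose inverse. QEPmin: minimize $\lambda$ over pairs $(\lambda,z)$ with $\lambda\in\mathbb{R}$, $0\neq z\in\mathcal N(C^{\top})$ and $(PAP-\lambda I)^2z=\gamma^{-2}b_0b_0^{\top}z$. QEPmin is in the hard case if it has a minimizer $(\lambda_*,z_* )$ with $b_0^{\top}z_*=0$; otherwise in the easy case. *)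

From mathcomp Require Import all_boot all_order all_algebra.
From Stdlib Require Import ClassicalEpsilon.
Set Implicit Arguments. Unset Strict Implicit. Unset Printing Implicit Defensive.
Import Order.TTheory GRing.Theory Num.Theory.
Local Open Scope ring_scope.

Section Defs.
Variable R : rcfType.

Definition norm2 k (v : 'cV[R]_k) : R := Num.sqrt ((v^T *m v) 0 0).

Definition is_pinv p q (X : 'M[R]_(p, q)) (Y : 'M[R]_(q, p)) : Prop :=
  [/\ X *m Y *m X = X, Y *m X *m Y = Y,
      (X *m Y)^T = X *m Y & (Y *m X)^T = Y *m X].

Definition pinv p q (X : 'M[R]_(p, q)) : 'M[R]_(q, p) :=
  epsilon (inhabits 0) (is_pinv X).

Definition n0 n m (C : 'M[R]_(n, m)) (b : 'cV[R]_m) : 'cV[R]_n :=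
  C *m invmx (C^T *m C) *m b.

Definition gamma n m (C : 'M[R]_(n, m)) (b : 'cV[R]_m) : R :=
  Num.sqrt (1 - norm2 (n0 C b) ^+ 2).

Definition Pproj n m (C : 'M[R]_(n, m)) : 'M[R]_n :=
  1%:M - C *m invmx (C^T *m C) *m C^T.

Definition b0 n m (A : 'M[R]_n) (C : 'M[R]_(n, m)) (b : 'cV[R]_m) : 'cV[R]_n :=
  Pproj C *m A *m n0 C b.

Definition QEP_feasible n m (A : 'M[R]_n) (C : 'M[R]_(n, m)) (b : 'cV[R]_m)
    (lam : R) (z : 'cV[R]_n) : Prop :=
  let M := Pproj C *m A *m Pproj C - lam%:M in
  [/\ z != 0, C^T *m z = 0 &
      M *m (M *m z) = (gamma C b ^- 2) *: (b0 A C b *m ((b0 A C b)^T *m z))].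

Definition QEP_minimizer n m (A : 'M[R]_n) (C : 'M[R]_(n, m)) (b : 'cV[R]_m)
    (lam : R) (z : 'cV[R]_n) : Prop :=
  QEP_feasible A C b lam z /\
  forall lam' z', QEP_feasible A C b lam' z' -> lam <= lam'.

Definition QEP_hard_case n m (A : 'M[R]_n) (C : 'M[R]_(n, m)) (b : 'cV[R]_m) : Prop :=
  exists lam z, QEP_minimizer A C b lam z /\ (b0 A C b)^T *m z = 0.

End Defs.

From mathcomp Require Import all_boot all_order all_algebra.
From mathcomp Require Import ring lra polyrcf complex.
From Stdlib Require Import ClassicalEpsilon.
Import Order.TTheory GRing.Theory Num.Theory.
Set Implicit Arguments. Unset Strict Implicit. Unset Printing Implicit Defensive.
Local Open Scope ring_scope.

(* Writing z = S1 y, QEPmin becomes the reduced problem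
   (H - lam)^2 y = gam^-2 g0 (g0^T y) with H symmetric.  A solution with
   g0^T y = 0 makes lam an eigenvalue of H, so lam >= lmin; hence the hard
   case occurs exactly when no lam < lmin is feasible.  For lam = lmin - t,
   t > 0, the matrix H - lam is positive definite and lam is feasible iff
   f t := ||(H - lam)^-1 g0||^2 equals gam^2 (the secular equation).  Now
   f t -> 0 as t -> oo, while as t -> 0+ the function f blows up if g0 has a
   component in U, and otherwise stays strictly below its limit
   ||(H - lmin)^+ g0||^2.  Multiplying f by a squared determinant gives a
   polynomial, so the intermediate value theorem produces a root below lmin
   unless g0 is orthogonal to U and ||(H - lmin)^+ g0|| <= gam; in that case
   an eigenvector of lmin solves the problem with g0^T y = 0. *)

Section SymmetricPSD.
Variables (R : rcfType) (k : nat) (X : 'M[R]_k).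
Hypothesis X_sym : X^T = X.
Local Notation rc := (real_complex R).
Local Notation Xc := (map_mx rc X).
Local Notation P := (spectralmx Xc).
Local Notation d := (spectral_diag Xc).

Lemma real_complex_real (x : R) : rc x \is Num.real.
Proof.
rewrite realE; case: (lerP 0 x) => hx; first by rewrite ler0c hx.
by rewrite -(rmorph0 rc) !lecR (ltW hx) orbT.
Qed.

Lemma map_sym_hermsym : Xc \is hermsymmx.
Proof.
apply: realsym_hermsym.
- apply/is_hermitianmxP; rewrite expr0 scale1r.
  by apply/matrixP => i j; rewrite !mxE -[X in LHS]X_sym mxE.
- by apply/mxOverP => i j; rewrite mxE real_complex_real.
Qed.

Lemma map_sym_spectral : Xc = invmx P *m diag_mx d *m P.
Proof. exact/orthomx_spectralP/hermitian_normalmx/map_sym_hermsym. Qed.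

Lemma spectral_diag_eigenvalue j : exists2 r, d 0 j = rc r & eigenvalue X r.
Proof.
have P_unitary : P \is unitarymx := spectral_unitarymx Xc.
have dj_rc : d 0 j = rc (complex.Re (d 0 j)).
  rewrite complexRe; apply/esym/Creal_ReP.
  exact: (mxOverP (hermitian_spectral_diag_real map_sym_hermsym)).
exists (complex.Re (d 0 j)) => //; rewrite -(eigenvalue_map rc).
suff : eigenvalue Xc (d 0 j) by rewrite {1}dj_rc.
apply/eigenvalueP; exists (row j P).
  have PXc : P *m Xc = diag_mx d *m P.
    rewrite [M in P *m M]map_sym_spectral invmx_unitary // !mulmxA.
    by rewrite (unitarymxP P_unitary) mul1mx.
  by have := congr1 (row j) PXc; rewrite !row_mul row_diag_mx -scalemxAl -rowE.
apply/eqP => Pj0; move/row_unitarymxP: P_unitary => /(_ j j).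
by rewrite Pj0 eqxx dotmxE mul0mx mxE => /eqP; rewrite eq_sym oner_eq0.
Qed.

(* Diagonalize [X] unitarily over [R[i]]: the quadratic form becomes a sum
   of eigenvalues of [X] weighted by squared moduli. *)
Lemma sym_quad_ge0 : (forall r, eigenvalue X r -> 0 <= r) ->
  forall y : 'cV_k, 0 <= (y^T *m X *m y) 0 0.
Proof.
move=> X_eig_ge0 y; rewrite -ler0c; pose yc := map_mx rc y.
have -> : rc ((y^T *m X *m y) 0 0) = (yc^T *m Xc *m yc) 0 0.
  by rewrite /yc map_trmx -!map_mxM [RHS]mxE.
have ycT : yc^T = map_mx Num.conj yc^T.
  by rewrite realmxC //; apply/mxOverP => i j; rewrite !mxE real_complex_real.
have -> : yc^T *m Xc *m yc = map_mx Num.conj (P *m yc)^T *m diag_mx d *m (P *m yc).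
  rewrite {1}map_sym_spectral invmx_unitary ?spectral_unitarymx //.
  by rewrite trmx_mul map_mxM -ycT !mulmxA.
rewrite mul_mx_diag mxE; apply: sumr_ge0 => j _; rewrite !mxE mulrC mulrA.
apply: mulr_ge0; first exact: mul_conjC_ge0.
by have [r -> /X_eig_ge0] := spectral_diag_eigenvalue j; rewrite ler0c.
Qed.

End SymmetricPSD.

Section Dot.
Variables (R : rcfType) (k : nat).
Implicit Types x y z : 'cV[R]_k.

Definition dot x y : R := \sum_i x i 0 * y i 0.

Lemma dotE x y : (x^T *m y) 0 0 = dot x y.
Proof. by rewrite mxE; apply: eq_bigr => i _; rewrite mxE. Qed.

Lemma dotM x y : x^T *m y = (dot x y)%:M.
Proof. by rewrite [LHS]mx11_scalar dotE. Qed.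

Lemma dotC x y : dot x y = dot y x.
Proof. by apply: eq_bigr => i _; rewrite mulrC. Qed.

Lemma dotDl x y z : dot (x + y) z = dot x z + dot y z.
Proof. by rewrite /dot -big_split; apply: eq_bigr => i _; rewrite mxE mulrDl. Qed.

Lemma dotDr x y z : dot z (x + y) = dot z x + dot z y.
Proof. by rewrite dotC dotDl !(dotC z). Qed.

Lemma dotZl a x y : dot (a *: x) y = a * dot x y.
Proof. by rewrite /dot mulr_sumr; apply: eq_bigr => i _; rewrite mxE mulrA. Qed.

Lemma dotZr a x y : dot x (a *: y) = a * dot x y.
Proof. by rewrite dotC dotZl dotC. Qed.

Lemma dotBl x y z : dot (x - y) z = dot x z - dot y z.
Proof. by rewrite dotDl -scaleN1r dotZl mulN1r. Qed.

Lemma dotBr x y z : dot z (x - y) = dot z x - dot z y.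
Proof. by rewrite dotC dotBl !(dotC z). Qed.

Lemma dot0l x : dot 0 x = 0.
Proof. by rewrite /dot big1 // => i _; rewrite mxE mul0r. Qed.

Lemma dot_mulmx x (A : 'M[R]_k) y : dot x (A *m y) = dot (A^T *m x) y.
Proof. by rewrite -!dotE trmx_mul trmxK mulmxA. Qed.

Lemma dot_ge0 x : 0 <= dot x x.
Proof. by apply: sumr_ge0 => i _; rewrite -expr2 sqr_ge0. Qed.

Lemma dot_eq0 x : (dot x x == 0) = (x == 0).
Proof.
apply/idP/eqP => [/eqP x0|->]; last by rewrite dot0l.
apply/matrixP => i j; rewrite ord1 mxE.
have /psumr_eq0P/(_ i isT) : dot x x = 0 := x0.
by move=> /(_ (fun i _ => sqr_ge0 (x i 0)))/eqP; rewrite mulf_eq0 orbb => /eqP.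
Qed.

Lemma dot_gt0 x : (0 < dot x x) = (x != 0).
Proof. by rewrite lt_def dot_ge0 andbT dot_eq0. Qed.

Lemma dot_sqrD x y : dot (x + y) (x + y) = dot x x + 2 * dot x y + dot y y.
Proof. rewrite !dotDl !dotDr (dotC y x); ring. Qed.

Lemma cauchy_schwarz x y : dot x y ^+ 2 <= dot x x * dot y y.
Proof.
have [->|x_neq0] := eqVneq x 0.
  by rewrite !dot0l expr0n mul0r.
have xx_gt0 : 0 < dot x x by rewrite dot_gt0.
set s := dot x y / dot x x.
have := dot_ge0 (y - s *: x).
rewrite !dotBl !dotBr !dotZl !dotZr (dotC y x) => h; rewrite -subr_ge0.
have -> : dot x x * dot y y - dot x y ^+ 2 =
  dot x x * (dot y y - s * dot x y - (s * dot x y - s * (s * dot x x))).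
  by rewrite /s; field; rewrite gt_eqF.
by rewrite mulr_ge0 // ltW.
Qed.

End Dot.

Lemma norm2_le (R : rcfType) k (v : 'cV[R]_k) r :
  0 <= r -> (norm2 v <= r) = (dot v v <= r ^+ 2).
Proof.
by move=> r_ge0; rewrite /norm2 dotE -{1}(ger0_norm r_ge0) -sqrtr_sqr ler_sqrt ?sqr_ge0.
Qed.

Section PseudoInverse.
Variable R : rcfType.

Lemma mulmx_col_inj_unit k (A : 'M[R]_k) :
  (forall z : 'cV_k, A *m z = 0 -> z = 0) -> A \in unitmx.
Proof.
move=> A_inj; rewrite -unitmx_tr -row_free_unit; apply/inj_row_free => v vA0.
by apply: trmx_inj; rewrite trmx0; apply: A_inj; rewrite -[A]trmxK -trmx_mul vA0 trmx0.
Qed.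

Lemma gram_unit p r (B : 'M[R]_(p, r)) : \rank B = r -> B^T *m B \in unitmx.
Proof.
move=> rkB; apply: mulmx_col_inj_unit => z BBz0.
have /eqP : dot (B *m z) (B *m z) = 0.
  by rewrite -dotE trmx_mul -mulmxA (mulmxA B^T) BBz0 mulmx0 mxE.
rewrite dot_eq0 => /eqP Bz0.
have /eqP : z^T *m B^T = 0 by rewrite -trmx_mul Bz0 trmx0.
rewrite mulmx_free_eq0 ?trmx_eq0 => [/eqP //|].
by rewrite /row_free mxrank_tr rkB.
Qed.

(* The full-rank factorization [X = Bc *m Cr] gives the closed form
   [Cr^T (Cr Cr^T)^-1 (Bc^T Bc)^-1 Bc^T] for the pseudo-inverse. *)
Lemma is_pinv_full_rank_factor p q r (Bc : 'M[R]_(p, r)) (Cr : 'M[R]_(r, q)) :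
  \rank Bc = r -> \rank Cr^T = r -> exists Y, is_pinv (Bc *m Cr) Y.
Proof.
move=> rkB rkC; have GB_unit := gram_unit rkB.
have := gram_unit rkC; rewrite trmxK => GC_unit.
set GB := Bc^T *m Bc in GB_unit *; set GC := Cr *m Cr^T in GC_unit *.
have GB_sym : (invmx GB)^T = invmx GB by rewrite trmx_inv /GB trmx_mul trmxK.
have GC_sym : (invmx GC)^T = invmx GC by rewrite trmx_inv /GC trmx_mul trmxK.
set Y := Cr^T *m invmx GC *m invmx GB *m Bc^T; exists Y.
have XY : Bc *m Cr *m Y = Bc *m invmx GB *m Bc^T.
  by rewrite /Y !mulmxA -(mulmxA Bc) -/GC mulmxK.
have YX : Y *m (Bc *m Cr) = Cr^T *m invmx GC *m Cr.
  by rewrite /Y !mulmxA -(mulmxA _ Bc^T) -/GB mulmxKV.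
split.
- by rewrite XY !mulmxA -(mulmxA _ Bc^T) -/GB mulmxKV.
- by rewrite YX /Y !mulmxA -(mulmxA _ Cr) -/GC mulmxKV.
- by rewrite XY !trmx_mul trmxK GB_sym mulmxA.
- by rewrite YX !trmx_mul trmxK GC_sym mulmxA.
Qed.

Lemma pinvP p q (X : 'M[R]_(p, q)) : is_pinv X (pinv X).
Proof.
apply: epsilon_spec; rewrite -[X in is_pinv X]mulmx_base.
apply: is_pinv_full_rank_factor; first exact/eqP/col_base_full.
by rewrite mxrank_tr; apply/eqP/row_base_free.
Qed.

End PseudoInverse.

Section InverseNormIVT.
Variables (R : rcfType) (k : nat) (M0 M1 : 'M[R]_k) (g : 'cV[R]_k) (c : R).

Local Notation M t := (M0 + t *: M1).
Local Notation inv_norm t := (dot (invmx (M t) *m g) (invmx (M t) *m g)).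

Lemma adj_scale_invmx (A : 'M[R]_k) : A \in unitmx -> \adj A = \det A *: invmx A.
Proof.
move=> A_unit; have detA : \det A != 0 by rewrite -unitfE -unitmxE.
by rewrite /invmx A_unit scalerA mulfV // scale1r.
Qed.

(* Clearing the denominator [\det (M t) ^+ 2] turns [c - inv_norm t]
   into a polynomial in [t], to which the real-closed IVT applies. *)
Lemma adj_norm_poly : exists p : {poly R}, forall t,
  p.[t] = c * \det (M t) ^+ 2 - dot (\adj (M t) *m g) (\adj (M t) *m g).
Proof.
pose Mp : 'M[{poly R}]_k := \matrix_(i, j) ((M0 i j)%:P + 'X * (M1 i j)%:P).
pose gp := map_mx polyC g.
exists (c%:P * \det Mp ^+ 2 - \sum_i ((\adj Mp *m gp) i 0) ^+ 2) => t.
have Mp_t : map_mx (horner_eval t) Mp = M t.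
  apply/matrixP => i j; rewrite !mxE /= horner_evalE.
  by rewrite hornerD hornerM !hornerC hornerX.
have gp_t : map_mx (horner_eval t) gp = g.
  by apply/matrixP => i j; rewrite !mxE /= horner_evalE hornerC.
rewrite -horner_evalE rmorphB rmorphM rmorphXn -det_map_mx Mp_t rmorph_sum /=.
rewrite horner_evalE hornerC; congr (_ - _); apply: eq_bigr => i _.
rewrite horner_evalE horner_exp expr2 -horner_evalE -Mp_t -gp_t.
by rewrite -map_mx_adj -map_mxM [in RHS]mxE.
Qed.

Lemma inv_norm_ivt a b : a <= b -> (forall t, a <= t <= b -> M t \in unitmx) ->
  (c - inv_norm a) * (c - inv_norm b) < 0 ->
  exists t, [/\ a < t, t < b & inv_norm t = c].
Proof.
move=> le_ab M_unit sign_change; have [p pE] := adj_norm_poly.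
have p_unit t : M t \in unitmx -> p.[t] = \det (M t) ^+ 2 * (c - inv_norm t).
  by move=> Mt_unit; rewrite pE adj_scale_invmx // -scalemxAl dotZl dotZr; ring.
have det2_gt0 t : M t \in unitmx -> 0 < \det (M t) ^+ 2.
  by rewrite unitmxE unitfE => det_neq0; rewrite exprn_even_gt0.
have [Ma Mb] : M a \in unitmx /\ M b \in unitmx.
  by split; apply: M_unit; rewrite lexx le_ab.
have pab_lt0 : p.[a] * p.[b] < 0.
  by rewrite !p_unit // mulrACA pmulr_rlt0 // mulr_gt0 // det2_gt0.
have [t] := poly_ivtoo le_ab pab_lt0.
rewrite in_itv /= => /andP[lt_at lt_tb] /rootP.
have Mt_unit : M t \in unitmx by rewrite M_unit // !ltW.
rewrite p_unit // => /eqP; rewrite mulf_eq0 gt_eqF ?det2_gt0 //= subr_eq0 => /eqP.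
by exists t.
Qed.

End InverseNormIVT.

Section ReducedQEP.
Variables (R : rcfType) (k : nat) (H : 'M[R]_k) (g : 'cV[R]_k) (gam lmin : R).

Definition rfeasible lam (y : 'cV[R]_k) : Prop :=
  y != 0 /\ (H - lam%:M) *m ((H - lam%:M) *m y) = gam ^- 2 *: (g *m (g^T *m y)).

Definition rhard_case : Prop :=
  exists lam y, [/\ rfeasible lam y, forall lam' y', rfeasible lam' y' -> lam <= lam'
                  & g^T *m y = 0].

Definition orth_eigenspace : Prop :=
  forall u : 'rV[R]_k, (u <= eigenspace H lmin)%MS -> u *m g = 0.

Hypothesis H_sym : H^T = H.
Hypothesis lmin_le : forall a, eigenvalue H a -> lmin <= a.
Hypothesis gam_gt0 : 0 < gam.
Hypothesis g_neq0 : g != 0.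

Local Notation c := (gam ^+ 2).
Let X := H - lmin%:M.
Local Notation B t := (X + t *: 1%:M).

Lemma c_gt0 : 0 < c. Proof. exact: exprn_gt0. Qed.

Lemma X_sym : X^T = X.
Proof. by rewrite /X linearB /= tr_scalar_mx H_sym. Qed.

Lemma dot_X_ge0 y : 0 <= dot y (X *m y).
Proof.
rewrite -dotE mulmxA; apply: (sym_quad_ge0 X_sym) => r X_r.
suff : lmin <= lmin + r by rewrite lerDl.
apply: lmin_le; move: X_r; rewrite /eigenvalue /eigenspace /X.
by rewrite (raddfD (@scalar_mx R k)) opprD addrA.
Qed.

Lemma B_shift t : H - (lmin - t)%:M = B t.
Proof.
by rewrite scalemx1 /X (raddfB (@scalar_mx R k)) opprB [t%:M - _]addrC addrA.
Qed.

Lemma B_unit t : 0 < t -> B t \in unitmx.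
Proof.
move=> t_gt0; rewrite -row_free_unit -kermx_eq0; apply: contraT => ker_neq0.
have /lmin_le : eigenvalue H (lmin - t) by rewrite /eigenvalue /eigenspace B_shift.
lra.
Qed.

Lemma B_mul t (z : 'cV[R]_k) : B t *m z = X *m z + t *: z.
Proof. by rewrite mulmxDl -scalemxAl mul1mx. Qed.

Lemma dot_B_ge t y : 0 <= t -> t ^+ 2 * dot y y <= dot (B t *m y) (B t *m y).
Proof.
move=> t_ge0; rewrite B_mul dot_sqrD dotZl !dotZr (dotC (X *m y)).
have := dot_X_ge0 y; have := dot_ge0 (X *m y); nra.
Qed.

Lemma B_sym t : (B t)^T = B t.
Proof. by rewrite linearD linearZ /= trmx1 X_sym. Qed.

Let v t := invmx (B t) *m g.
(* [f t = c] is the secular equation of QEP at [lam = lmin - t]. *)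
Let f t := dot (v t) (v t).

Lemma B_v t : 0 < t -> B t *m v t = g.
Proof. by move=> t_gt0; rewrite /v mulKVmx // B_unit. Qed.

Lemma secular_eventually_lt t0 : 0 <= t0 -> exists2 t, t0 < t & f t < c.
Proof.
move=> t0_ge0; have gg_ge0 := dot_ge0 g; have c_gt0 := c_gt0.
set t := t0 + dot g g / c + 1.
have ggc_ge0 : 0 <= dot g g / c by rewrite divr_ge0 // ltW.
have t_ge1 : 1 <= t by rewrite /t; lra.
exists t; first by rewrite /t; lra.
have t_gt0 : 0 < t by lra.
have ct : c * t = c * t0 + dot g g + c by rewrite /t; field; rewrite gt_eqF.
have gg_lt : dot g g < t ^+ 2 * c by nra.
have := dot_B_ge (v t) (ltW t_gt0); rewrite B_v // => bound.
by rewrite -(ltr_pM2l (exprn_gt0 2 t_gt0)) (le_lt_trans bound).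
Qed.

Lemma rfeasible_secular t : 0 < t -> (exists y, rfeasible (lmin - t) y) <-> f t = c.
Proof.
move=> t_gt0; have c_neq0 : c != 0 := lt0r_neq0 c_gt0.
have Binv_sym : (invmx (B t))^T = invmx (B t) by rewrite trmx_inv B_sym.
rewrite /rfeasible B_shift; split=> [[y [y_neq0]]|ft].
  rewrite dotM mul_mx_scalar scalerA; set s := dot g y => BBy.
  have yE : y = (c^-1 * s) *: (invmx (B t) *m v t).
    by rewrite /v !scalemxAr -BBy !mulKmx ?B_unit.
  have s_neq0 : s != 0.
    by apply: contraNneq y_neq0 => s0; rewrite yE s0 mulr0 scale0r.
  have sE : s = c^-1 * f t * s.
    by rewrite mulrAC {1}/s {1}yE dotZr dot_mulmx Binv_sym.
  have : c^-1 * f t = 1 by apply: (mulIf s_neq0); rewrite mul1r -sE.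
  by move/(congr1 (fun x => c * x)); rewrite mulrA mulfV // mul1r mulr1.
exists (invmx (B t) *m v t); split.
  apply: contraNneq g_neq0 => v0.
  by rewrite -(B_v t_gt0) -[v t](mulKVmx (B_unit t_gt0)) v0 !mulmx0.
rewrite !mulKVmx ?B_unit // dotM dot_mulmx Binv_sym -/(v t) -/(f t) ft.
by rewrite mul_mx_scalar scalerA mulVf // scale1r.
Qed.

Lemma rfeasible_below_of_secular t : 0 < t -> f t = c ->
  exists2 lam, lam < lmin & exists y, rfeasible lam y.
Proof.
move=> t_gt0 /(rfeasible_secular t_gt0) feas.
by exists (lmin - t) => //; rewrite ltrBlDr ltrDl.
Qed.

Lemma rfeasible_orth_ge lam y : rfeasible lam y -> g^T *m y = 0 -> lmin <= lam.
Proof.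
move=> [y_neq0 +] gy0; rewrite gy0 mulmx0 scaler0; set N := H - lam%:M => NNy0.
have N_sym : N^T = N by rewrite /N linearB /= tr_scalar_mx H_sym.
have /eqP : dot (N *m y) (N *m y) = 0 by rewrite dot_mulmx N_sym NNy0 dot0l.
rewrite dot_eq0 => /eqP Ny0.
apply: lmin_le; apply/eigenvalueP; exists y^T; last by rewrite trmx_eq0.
have /eqP : y^T *m N = 0 by rewrite -N_sym -trmx_mul Ny0 trmx0.
by rewrite /N mulmxBr mul_mx_scalar subr_eq0 => /eqP.
Qed.

Lemma rfeasible_eigvec (u : 'rV[R]_k) : u != 0 -> u *m H = lmin *: u -> u *m g = 0 ->
  rfeasible lmin u^T.
Proof.
move=> u_neq0 uH ug0; split; first by rewrite trmx_eq0.
have -> : X *m u^T = 0.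
  by rewrite -X_sym -trmx_mul /X mulmxBr mul_mx_scalar uH subrr trmx0.
by rewrite -trmx_mul ug0 trmx0 !mulmx0 scaler0.
Qed.

Local Notation W := (pinv X).
(* [Pi] is the orthogonal projector onto the kernel of [X], i.e. onto the
   eigenspace of [lmin]. *)
Let Pi := 1%:M - X *m W.
Let w := W *m g.

Lemma Pi_X : Pi *m X = 0.
Proof. by case: (pinvP X) => XWX _ _ _; rewrite /Pi mulmxBl mul1mx XWX subrr. Qed.

Lemma Pi_sym : Pi^T = Pi.
Proof.
by case: (pinvP X) => _ _ XW_sym _; rewrite /Pi linearB /= tr_scalar_mx XW_sym.
Qed.

Lemma Pi_idem : Pi *m Pi = Pi.
Proof. by rewrite {2}/Pi mulmxBr mulmx1 mulmxA Pi_X mul0mx subr0. Qed.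

Lemma Pi_w : Pi *m w = 0.
Proof.
case: (pinvP X) => _ WXW _ WX_sym; rewrite /w.
have -> : W = X *m (W^T *m W) by rewrite -{1}WXW -WX_sym trmx_mul X_sym mulmxA.
by rewrite !mulmxA Pi_X !mul0mx.
Qed.

Lemma Pi_B t (z : 'cV[R]_k) : Pi *m (B t *m z) = t *: (Pi *m z).
Proof. by rewrite B_mul mulmxDr mulmxA Pi_X mul0mx add0r scalemxAr. Qed.

Lemma Pi_g : orth_eigenspace -> Pi *m g = 0.
Proof.
move=> g_orth; have : (Pi *m g)^T *m g = 0.
  by apply: g_orth; apply/sub_kermxP; rewrite trmx_mul Pi_sym -mulmxA Pi_X mulmx0.
move/(congr1 (fun N : 'M_1 => N 0 0)); rewrite dotE mxE => Pig_g.
by apply/eqP; rewrite -dot_eq0 dot_mulmx Pi_sym mulmxA Pi_idem Pig_g.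
Qed.

Lemma X_w : orth_eigenspace -> X *m w = g.
Proof.
move/Pi_g/eqP; rewrite /Pi mulmxBl mul1mx subr_eq0 => /eqP gE.
by rewrite /w mulmxA -gE.
Qed.

Lemma secular_lt_pinv t : orth_eigenspace -> 0 < t -> f t < dot w w.
Proof.
move=> g_orth t_gt0; set d := w - v t.
have Xd : X *m d = t *: v t.
  rewrite /d mulmxBr X_w // -{1}(B_v t_gt0) B_mul.
  by rewrite addrAC subrr add0r.
have vd_ge0 : 0 <= dot (v t) d.
  have -> : v t = t^-1 *: (X *m d) by rewrite Xd scalerA mulVf ?scale1r // lt0r_neq0.
  rewrite dotZl (dotC (X *m d)); apply: mulr_ge0; last exact: dot_X_ge0.
  by rewrite invr_ge0 ltW.
have dd_gt0 : 0 < dot d d.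
  rewrite dot_gt0; apply: contraNneq g_neq0 => d0.
  have /eqP : t *: v t = 0 by rewrite -Xd d0 mulmx0.
  rewrite scaler_eq0 (negbTE (lt0r_neq0 t_gt0)) /= => /eqP v0.
  by rewrite -(B_v t_gt0) v0 mulmx0.
have -> : w = v t + d by rewrite /d addrC subrK.
rewrite dot_sqrD -/(f t); lra.
Qed.

Lemma no_rfeasible_below lam y : orth_eigenspace -> dot w w <= c -> lam < lmin ->
  ~ rfeasible lam y.
Proof.
move=> g_orth w_le lt_lam feas.
have t_gt0 : 0 < lmin - lam by rewrite subr_gt0.
have := secular_lt_pinv g_orth t_gt0.
have -> : f (lmin - lam) = c.
  by apply/(rfeasible_secular t_gt0); exists y; rewrite opprB addrC subrK.
lra.
Qed.

Lemma secular_gt_near0 (u : 'rV[R]_k) : (u <= eigenspace H lmin)%MS -> u *m g != 0 ->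
  exists2 t, 0 < t & c < f t.
Proof.
move=> /sub_kermxP uX0 ug_neq0.
have u_neq0 : u != 0 by apply: contraNneq ug_neq0 => ->; rewrite mul0mx.
set al := (u *m g) 0 0 ^+ 2; set be := c * dot u^T u^T.
have al_gt0 : 0 < al.
  rewrite exprn_even_gt0 //; apply: contraNneq ug_neq0 => ug0.
  by apply/eqP/matrixP => i j; rewrite !ord1 ug0 mxE.
have be_gt0 : 0 < be by rewrite mulr_gt0 ?c_gt0 // dot_gt0 trmx_eq0.
(* any [t] with [t ^+ 2 * be < al] works *)
set t := al / (al + be).
have t_gt0 : 0 < t by rewrite divr_gt0 // addr_gt0.
have tE : t * (al + be) = al by rewrite /t divfK // lt0r_neq0 // addr_gt0.
exists t => //; rewrite ltNge; apply/negP => ft_le.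
have ugE : (u *m g) 0 0 = t * dot u^T (v t).
  have uB : u *m B t = t *: u by rewrite mulmxDr uX0 add0r -scalemxAr mulmx1.
  by rewrite -(B_v t_gt0) mulmxA uB -scalemxAl mxE -dotE trmxK.
have : al <= t ^+ 2 * be.
  rewrite /al ugE exprMn /be; apply: ler_wpM2l; first exact: sqr_ge0.
  apply: (le_trans (cauchy_schwarz u^T (v t))); rewrite mulrC.
  by apply: ler_wpM2r; [exact: dot_ge0 | exact: ft_le].
nra.
Qed.

Lemma rfeasible_below_of_not_orth (u : 'rV[R]_k) :
  (u <= eigenspace H lmin)%MS -> u *m g != 0 ->
  exists2 lam, lam < lmin & exists y, rfeasible lam y.
Proof.
move=> uU ug_neq0; have [t0 t0_gt0 ft0] := secular_gt_near0 uU ug_neq0.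
have [t1 lt_t01 ft1] := secular_eventually_lt (ltW t0_gt0).
have B_unit_on s : t0 <= s <= t1 -> X + s *: 1%:M \in unitmx.
  by case/andP=> t0_le _; rewrite B_unit // (lt_le_trans t0_gt0).
have sign_change : (c - f t0) * (c - f t1) < 0 by nra.
have [t [lt_t0t _ ft]] := inv_norm_ivt (ltW lt_t01) B_unit_on sign_change.
exact: (rfeasible_below_of_secular (lt_trans t0_gt0 lt_t0t)).
Qed.

Local Notation M t := (X + Pi + t *: (1%:M - Pi)).
Local Notation inv_norm N := (dot (invmx N *m g) (invmx N *m g)).

Lemma M_mul t (z : 'cV[R]_k) : M t *m z = B t *m z + (1 - t) *: (Pi *m z).
Proof.
rewrite (mulmxDl (X + Pi)) (mulmxDl X Pi) B_mul.
by rewrite -scalemxAl (mulmxBl 1%:M Pi) mul1mx scalerBr scalerBl scale1r addrACA.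
Qed.

Lemma Pi_M t (z : 'cV[R]_k) : Pi *m (M t *m z) = Pi *m z.
Proof.
rewrite M_mul mulmxDr Pi_B -scalemxAr mulmxA Pi_idem -scalerDl.
by rewrite [t + _]addrC subrK scale1r.
Qed.

Lemma M_unit t : 0 <= t -> M t \in unitmx.
Proof.
move=> t_ge0; apply: mulmx_col_inj_unit => z Mz0.
have Piz0 : Pi *m z = 0 by rewrite -(Pi_M t) Mz0 mulmx0.
move: Mz0; rewrite M_mul Piz0 scaler0 addr0.
move: t_ge0; rewrite le_eqVlt => /orP[/eqP <-|t_gt0 Bz0]; last first.
  by rewrite -[z](mulKmx (B_unit t_gt0)) Bz0 mulmx0.
rewrite B_mul scale0r addr0 => Xz0.
case: (pinvP X) => _ _ XW_sym _.
have -> : z = X *m W *m z + Pi *m z by rewrite -mulmxDl /Pi addrC subrK mul1mx.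
by rewrite Piz0 addr0 -XW_sym trmx_mul X_sym -mulmxA Xz0 mulmx0.
Qed.

Lemma M_inv_g t : orth_eigenspace -> 0 < t -> invmx (M t) *m g = v t.
Proof.
move=> g_orth t_gt0.
have /eqP : t *: (Pi *m v t) = 0 by rewrite -Pi_B B_v // Pi_g.
rewrite scaler_eq0 (negbTE (lt0r_neq0 t_gt0)) /= => /eqP Piv0.
have Mv : M t *m v t = g by rewrite M_mul Piv0 scaler0 addr0 B_v.
by rewrite -{1}Mv mulKmx // M_unit // ltW.
Qed.

Lemma M0_inv_g : orth_eigenspace -> invmx (M 0) *m g = w.
Proof.
move=> g_orth.
have Mw : M 0 *m w = g.
  by rewrite M_mul Pi_w scaler0 addr0 B_mul scale0r addr0 X_w.
by rewrite -{1}Mw mulKmx // M_unit.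
Qed.

(* The path [M t] agrees with [B t] on [g] for [t > 0] but stays invertible
   at [t = 0], where it sends [g] to [w]: this gives the secular function a
   continuous extension with value [dot w w] at [0]. *)
Lemma rfeasible_below_of_large_pinv : orth_eigenspace -> c < dot w w ->
  exists2 lam, lam < lmin & exists y, rfeasible lam y.
Proof.
move=> g_orth w_gt; have [t1 t1_gt0 ft1] := secular_eventually_lt (lexx 0).
have M_unit_on s : 0 <= s <= t1 -> M s \in unitmx.
  by case/andP=> s_ge0 _; exact: M_unit.
have sign_change : (c - inv_norm (M 0)) * (c - inv_norm (M t1)) < 0.
  by rewrite M0_inv_g // M_inv_g // -/(f t1); nra.
have [t [t_gt0 _ ft]] := inv_norm_ivt (ltW t1_gt0) M_unit_on sign_change.
by apply: (rfeasible_below_of_secular t_gt0); rewrite -ft M_inv_g.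
Qed.

Lemma rhard_caseP : eigenvalue H lmin ->
  rhard_case <-> orth_eigenspace /\ norm2 (pinv (H - lmin%:M) *m g) <= gam.
Proof.
move=> lmin_eig; rewrite norm2_le; last exact: ltW.
split.
  move=> [lam [y [feas lam_min gy0]]].
  have lmin_le_lam := rfeasible_orth_ge feas gy0.
  have none_below : ~ exists2 lam', lam' < lmin & exists y', rfeasible lam' y'.
    by move=> [lam' lt_lam' [y' /lam_min]]; lra.
  have g_orth : orth_eigenspace.
    move=> u uU; apply/eqP; apply: contraT => ug_neq0.
    by case: none_below; exact: rfeasible_below_of_not_orth uU ug_neq0.
  split=> //; rewrite leNgt; apply/negP => w_gt.
  by case: none_below; exact: rfeasible_below_of_large_pinv.
move=> [g_orth w_le]; have [u uH u_neq0] := eigenvalueP lmin_eig.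
have ug0 : u *m g = 0 by apply/g_orth/eigenspaceP.
exists lmin, u^T; split.
- exact: rfeasible_eigvec.
- move=> lam' y' feas'; rewrite leNgt; apply/negP => lt_lam'.
  exact: no_rfeasible_below feas'.
- by rewrite -trmx_mul ug0 trmx0.
Qed.

End ReducedQEP.

Lemma mulmx_cV_ext (R : rcfType) p q (X Y : 'M[R]_(p, q)) :
  (forall y : 'cV_q, X *m y = Y *m y) -> X = Y.
Proof.
move=> XY; apply/matrixP => i j.
by have /matrixP/(_ i 0) := XY (delta_mx j 0); rewrite -!colE !mxE.
Qed.

Lemma gamma_gt0 (R : rcfType) n m (C : 'M[R]_(n, m)) (b : 'cV[R]_m) :
  norm2 (n0 C b) < 1 -> 0 < gamma C b.
Proof.
move=> n0_lt1; have n0_ge0 : 0 <= norm2 (n0 C b) by exact: sqrtr_ge0.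
by rewrite sqrtr_gt0 subr_gt0 expr2; nra.
Qed.

Section Reduction.
Variables (R : rcfType) (n m : nat) (A : 'M[R]_n) (C : 'M[R]_(n, m)) (b : 'cV[R]_m).
Variable S1 : 'M[R]_(n, n - m).
Hypothesis A_sym : A^T = A.
Hypothesis rkC : \rank C = m.
Hypothesis S1_orth : S1^T *m S1 = 1%:M.
Hypothesis S1_ker : forall z : 'cV[R]_n, C^T *m z = 0 <-> exists y, z = S1 *m y.

Local Notation P := (Pproj C).
Local Notation H := (S1^T *m A *m S1).
Local Notation g0 := (S1^T *m b0 A C b).

Lemma Pproj_sym : P^T = P.
Proof.
have G_sym : (C^T *m C)^T = C^T *m C by rewrite trmx_mul trmxK.
by rewrite /Pproj linearB /= tr_scalar_mx !trmx_mul trmxK trmx_inv G_sym mulmxA.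
Qed.

Lemma Ct_Pproj : C^T *m P = 0.
Proof. by rewrite /Pproj mulmxBr mulmx1 !mulmxA mulmxV ?gram_unit // mul1mx subrr. Qed.

Lemma Ct_S1 : C^T *m S1 = 0.
Proof.
apply: mulmx_cV_ext => y; rewrite mul0mx -mulmxA.
by apply/S1_ker; exists y.
Qed.

Lemma Pproj_S1 : P = S1 *m S1^T.
Proof.
have S1t_P : S1^T *m P = S1^T.
  rewrite -Pproj_sym -trmx_mul /Pproj mulmxBl mul1mx -(mulmxA _ C^T).
  by rewrite Ct_S1 mulmx0 subr0.
apply: mulmx_cV_ext => z.
have [y Pz] : exists y, P *m z = S1 *m y.
  by apply/S1_ker; rewrite mulmxA Ct_Pproj mul0mx.
rewrite Pz -mulmxA; congr (S1 *m _).
by rewrite -[y]mul1mx -S1_orth -mulmxA -Pz mulmxA S1t_P.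
Qed.

Lemma b0_S1 : b0 A C b = S1 *m g0.
Proof. by rewrite /b0 Pproj_S1 !mulmxA -(mulmxA S1 S1^T S1) S1_orth mulmx1. Qed.

Lemma H_sym : H^T = H.
Proof. by rewrite !trmx_mul trmxK A_sym mulmxA. Qed.

Lemma QEP_matrix_S1 lam (y : 'cV[R]_(n - m)) :
  (P *m A *m P - lam%:M) *m (S1 *m y) = S1 *m ((H - lam%:M) *m y).
Proof.
rewrite Pproj_S1 !mulmxBl mulmxBr !mul_scalar_mx scalemxAr; congr (_ - _).
by rewrite -!mulmxA (mulmxA S1^T S1 y) S1_orth mul1mx.
Qed.

Lemma b0_S1_dot (y : 'cV[R]_(n - m)) : (b0 A C b)^T *m (S1 *m y) = g0^T *m y.
Proof. by rewrite {1}b0_S1 trmx_mul -mulmxA (mulmxA S1^T S1 y) S1_orth mul1mx. Qed.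

Lemma QEP_feasibleE lam z : QEP_feasible A C b lam z <->
  exists2 y, z = S1 *m y & rfeasible H g0 (gamma C b) lam y.
Proof.
have S1_inj (y1 y2 : 'cV_(n - m)) : S1 *m y1 = S1 *m y2 -> y1 = y2.
  by move=> eq12; rewrite -[y1]mul1mx -[y2]mul1mx -S1_orth -!mulmxA eq12.
have rhsE (y : 'cV_(n - m)) (a : R) :
    a *: (b0 A C b *m ((b0 A C b)^T *m (S1 *m y))) = S1 *m (a *: (g0 *m (g0^T *m y))).
  by rewrite b0_S1_dot {1}b0_S1 -mulmxA scalemxAr.
rewrite /QEP_feasible /rfeasible; split.
  case=> z_neq0 /S1_ker[y zE]; rewrite zE in z_neq0 * => eq; exists y => //; split.
    by apply: contraNneq z_neq0 => ->; rewrite mulmx0.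
  by apply: S1_inj; rewrite -rhsE -!QEP_matrix_S1.
case=> y -> [y_neq0 eq]; split.
- apply: contraNneq y_neq0 => /(congr1 (mulmx S1^T)).
  by rewrite mulmxA S1_orth mul1mx mulmx0 => ->.
- by rewrite mulmxA Ct_S1 mul0mx.
- by rewrite !QEP_matrix_S1 eq rhsE.
Qed.

Lemma QEP_hard_caseE : QEP_hard_case A C b <-> rhard_case H g0 (gamma C b).
Proof.
split=> [[lam [z [[feas lam_min] b0z0]]] | [lam [y [feas lam_min g0y0]]]].
  have /QEP_feasibleE[y zE feas_y] := feas.
  exists lam, y; split=> //; last by rewrite -b0_S1_dot -zE.
  move=> lam' y' feas'; apply: (lam_min _ (S1 *m y')).
  by apply/QEP_feasibleE; exists y'.
exists lam, (S1 *m y); split; last by rewrite b0_S1_dot.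
split; first by apply/QEP_feasibleE; exists y.
by move=> lam' z' /QEP_feasibleE[y' _ /lam_min].
Qed.

End Reduction.

Theorem theorem2p12 (R : rcfType) (n m : nat)
    (A : 'M[R]_n) (C : 'M[R]_(n, m)) (b : 'cV[R]_m)
    (S1 : 'M[R]_(n, n - m)) (lmin : R) :
  (m < n)%N ->
  A^T = A ->
  \rank C = m ->
  norm2 (n0 C b) < 1 ->
  b0 A C b != 0 ->
  S1^T *m S1 = 1%:M ->
  (forall z : 'cV[R]_n, C^T *m z = 0 <-> exists y : 'cV[R]_(n - m), z = S1 *m y) ->
  let H := S1^T *m A *m S1 in
  let g0 := S1^T *m b0 A C b in
  eigenvalue H lmin ->
  (forall a, eigenvalue H a -> lmin <= a) ->
  (QEP_hard_case A C b <->
    ((forall u : 'rV[R]_(n - m), (u <= eigenspace H lmin)%MS -> u *m g0 = 0) /\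
     norm2 (pinv (H - lmin%:M) *m g0) <= gamma C b)).
Proof.
move=> _ A_sym rkC n0_lt1 b0_neq0 S1_orth S1_ker H g0 lmin_eig lmin_le.
have g0_neq0 : g0 != 0.
  apply: contraNneq b0_neq0 => g0_eq0.
  by rewrite (b0_S1 A b rkC S1_orth S1_ker) -/g0 g0_eq0 mulmx0.
rewrite (QEP_hard_caseE A b rkC S1_orth S1_ker).
apply: rhard_caseP => //; first exact: H_sym.
exact: gamma_gt0.
Qed.
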